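(* Let $\mathsf{A}=(A_1,\dots,A_N)\in GL_2(\mathbb{R})^N$ be dominated and reducible, with $\|A_i\|<1$ for all $i$, such that $X_F$ is not a singleton. Then, after possibly a change of basis, $$A_i=\begin{pmatrix}a_i&b_i\\0&d_i\end{pmatrix}\quad\text{with }0<|d_i|<|a_i|<1\text{ for all }i\in\{1,\dots,N\},$$ and the matrices $A_1,\dots,A_N$ are not simultaneously diagonalizable.
   Context: For a finite word $\mathtt{i}=i_1\cdots i_n$, $A_{\mathtt{i}}=A_{i_1}\cdots A_{i_n}$, $|\mathtt{i}|=n$; $\Sigma_*$ is the set of finite words. Dominated: $\exists C>0,0<\tau<1$ with $\alpha_2(A_{\mathtt{i}})\le C\tau^{|\mathtt{i}|}\alpha_1(A_{\mathtt{i}})$ for all $\mathtt{i}\in\Sigma_*$, where $\alpha_1\ge\alpha_2$ are singular values. Reducible: some line through the origin is invariant under all $A_i$. Furstenberg directions: $X_F=\{A\mathbb{R}^2: A$ rank-one matrix in the closure of $\{cA_{i_1}^{-1}\cdots A_{i_n}^{-1}: c\in\mathbb{R}, i_1\cdots i_n\in\Sigma_*\}\}$. *)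

From HB Require Import structures.
From mathcomp Require Import all_boot all_order all_algebra.
From mathcomp Require Import all_classical all_reals all_analysis.
Set Implicit Arguments. Unset Strict Implicit. Unset Printing Implicit Defensive.
Import Order.TTheory GRing.Theory Num.Theory numFieldNormedType.Exports.
Local Open Scope ring_scope.
Local Open Scope classical_set_scope.

Definition i0 : 'I_2 := ord0.
Definition i1 : 'I_2 := ord_max.

Section Defs.
Variable R : realType.

Definition vnorm (x : 'cV[R]_2) : R := Num.sqrt (x i0 ord0 ^+ 2 + x i1 ord0 ^+ 2).

Definition opnorm (A : 'M[R]_2) : R :=
  sup [set vnorm (A *m x) | x in [set x : 'cV[R]_2 | vnorm x = 1]].

(* Singular values alpha_1 >= alpha_2 of a 2x2 matrix: square roots of the
   two eigenvalues of A^T A, i.e. of the roots of X^2 - tr(A^T A) X + det(A)^2. *)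
Definition sv_disc (A : 'M[R]_2) : R :=
  Num.sqrt (\tr (A^T *m A) ^+ 2 - 4 * (\det A) ^+ 2).
Definition sv1 (A : 'M[R]_2) : R := Num.sqrt ((\tr (A^T *m A) + sv_disc A) / 2).
Definition sv2 (A : 'M[R]_2) : R := Num.sqrt ((\tr (A^T *m A) - sv_disc A) / 2).

Variable N : nat.

Definition word_prod (A : 'I_N -> 'M[R]_2) (w : seq 'I_N) : 'M[R]_2 :=
  \prod_(i <- w) A i.

Definition dominated (A : 'I_N -> 'M[R]_2) : Prop :=
  exists (C tau : R), 0 < C /\ 0 < tau < 1 /\
    forall w : seq 'I_N,
      sv2 (word_prod A w) <= C * tau ^+ size w * sv1 (word_prod A w).

Definition reducible (A : 'I_N -> 'M[R]_2) : Prop :=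
  exists v : 'cV[R]_2, v != 0 /\ forall i, exists l : R, A i *m v = l *: v.

Definition furst_set (A : 'I_N -> 'M[R]_2) : set 'M[R]_2 :=
  [set M | exists (c : R) (w : seq 'I_N), M = c *: \prod_(i <- w) invmx (A i)].

(* X_F: the set of lines M R^2 (column spaces, represented canonically by
   <<M^T>>%MS, the row space of M^T) for rank-one M in the closure. *)
Definition XF (A : 'I_N -> 'M[R]_2) : set 'M[R]_2 :=
  [set L | exists M : 'M[R]_2,
     closure (furst_set A) M /\ \rank M = 1%N /\ L = (<< M^T >>)%MS].

End Defs.

From HB Require Import structures.
From mathcomp Require Import all_boot all_order all_algebra.
From mathcomp Require Import all_classical all_reals all_analysis.
From mathcomp Require Import ring lra.
From mathcomp Require Import perm.
Import Order.TTheory GRing.Theory Num.Theory numFieldNormedType.Exports.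
Local Open Scope ring_scope.
Local Open Scope classical_set_scope.

(* Rebase so that the invariant line is spanned by the first basis vector: the
   A_i become upper triangular with diagonals a_i, d_i.  Since |det A_w| is
   comparable to sv1 A_w * sv2 A_w, domination forces an exponential gap between
   |a_w| and |d_w| along the powers of every word w; words mixing two letters
   ordered differently violate it, so either |d_i| < |a_i| for all i or
   |a_i| < |d_i| for all i.  In the second case all normalized inverse products
   keep this triangular shape with a dominant (0,0) entry, so every rank-one
   limit has range the invariant line and X_F is a singleton.  Finally a_i is an
   eigenvalue, so |a_i| <= ||A_i|| < 1, and a simultaneous diagonalization could
   be composed with the swap of the two basis vectors, producing both orders. *)

Section RealBounds.
Context {R : realType}.

Lemma bernoulli_le (h : R) k : 0 <= h -> 1 + k%:R * h <= (1 + h) ^+ k.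
Proof.
move=> h0; elim: k => [|k IH]; first by rewrite expr0 mul0r addr0.
have : 0 <= k%:R * h by rewrite mulr_ge0 ?ler0n.
by rewrite exprS -natr1; nra.
Qed.

Lemma exp_gt_quadratic {q X : R} : 1 < q -> 0 <= X ->
  exists k : nat, X * (1 + k%:R ^+ 2) < q ^+ k.
Proof.
move=> q1 X0; set h := q - 1; have h0 : 0 < h by rewrite /h; lra.
have h3 : 0 < h ^+ 3 by apply: exprn_gt0.
have y0 : 0 <= 10 * X / h ^+ 3 by rewrite divr_ge0 // ?mulr_ge0 //; lra.
set k := (Num.Def.archi_bound (10 * X / h ^+ 3)).+1.
have ky : 10 * X < k%:R * h ^+ 3.
  by rewrite -ltr_pdivrMr // /k; apply: lt_le_trans (archi_boundP y0) _; rewrite ler_nat.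
have k1 : 1 <= k%:R :> R by rewrite /k ler1n.
exists (3 * k)%N.
have kh_le : k%:R * h <= q ^+ k.
  by have := bernoulli_le h k (ltW h0); rewrite (_ : 1 + h = q) ?/h; [lra | ring].
have kh0 : 0 <= k%:R * h by rewrite mulr_ge0 // ltW.
have : (k%:R * h) ^+ 3 <= q ^+ (3 * k).
  by rewrite mulnC exprM lerXn2r // nnegrE // (le_trans kh0 kh_le).
have : X * (1 + (3 * k)%:R ^+ 2) <= k%:R ^+ 2 * (10 * X).
  have k2 : 1 <= k%:R ^+ 2 :> R by rewrite expr_ge1.
  by rewrite natrM exprMn; nra.
have : k%:R ^+ 2 * (10 * X) < (k%:R * h) ^+ 3.
  rewrite (_ : (k%:R * h) ^+ 3 = k%:R ^+ 2 * (k%:R * h ^+ 3)); last by ring.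
  by rewrite ltr_pM2l // exprn_gt0 //; lra.
lra.
Qed.

Lemma exists_expr_lt {t e : R} : 0 < t < 1 -> 0 < e -> exists k : nat, t ^+ k < e.
Proof.
move=> /andP[t0 t1] e0.
have tV1 : 1 < t^-1 by rewrite invf_gt1.
have eV0 : 0 <= e^-1 by rewrite invr_ge0 ltW.
have [k hk] := exp_gt_quadratic tV1 eV0.
exists k; rewrite -ltf_pV2 ?posrE ?exprn_gt0 // -exprVn.
have : 0 <= e^-1 * k%:R ^+ 2 by rewrite mulr_ge0 ?invr_ge0 ?sqr_ge0 // ltW.
lra.
Qed.

(* Minimal-counterexample argument: with [tau ^+ m < x], take the least [n]
   bringing [x ^+ n * y ^+ m] down to at most [1]; one step earlier it exceeded [1]. *)
Lemma ratio_walk {tau x y : R} : 0 < tau < 1 -> 0 < x < 1 -> 1 < y ->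
  exists n m : nat, x ^+ n * y ^+ m <= 1 /\ tau ^+ (n + m) < x ^+ n * y ^+ m.
Proof.
move=> /andP[tau0 tau1] /andP[x0 x1] y1.
have [m0 tau_m0] := exists_expr_lt (introT andP (conj tau0 tau1)) x0.
set m := m0.+1.
have tau_m : tau ^+ m < x.
  by rewrite /m exprS; have := exprn_ge0 m0 (ltW tau0); nra.
have ym1 : 1 < y ^+ m by rewrite exprn_egt1.
have ex : exists n, x ^+ n * y ^+ m <= 1.
  have xV1 : 1 < x^-1 by rewrite invf_gt1.
  have [n hn] := exp_gt_quadratic xV1 (ltW (lt_trans ltr01 ym1)).
  exists n; have xn0 : 0 < x ^+ n := exprn_gt0 n x0.
  have : y ^+ m <= (x ^+ n)^-1.
    by rewrite -exprVn; have := sqr_ge0 (n%:R : R); nra.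
  by move/(ler_wpM2l (ltW xn0)); rewrite mulfV ?gt_eqF.
have [[|n] hn hmin] := find_ex_minn ex; first by move: hn; rewrite expr0 mul1r; lra.
exists n.+1, m; split => //.
have : 1 < x ^+ n * y ^+ m by rewrite ltNge; apply/negP => /hmin; rewrite ltnn.
have : tau ^+ (n.+1 + m) <= tau ^+ m.
  rewrite exprD; have := exprn_ge0 m (ltW tau0).
  by have := exprn_ile1 n.+1 (ltW tau0) (ltW tau1); have := exprn_ge0 n.+1 (ltW tau0); nra.
by rewrite exprS -mulrA; nra.
Qed.

End RealBounds.

Section Matrix2.
Context {R : realType}.
Implicit Types A B M P Q : 'M[R]_2.

Lemma ord2_cases (i : 'I_2) : i = i0 \/ i = i1.
Proof. by case: i => [[|[|]]] // ?; [left|right]; apply/val_inj. Qed.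

Lemma sum_ord2 (F : 'I_2 -> R) : \sum_(i < 2) F i = F i0 + F i1.
Proof. by rewrite big_ord_recr big_ord1 /=; congr (F _ + F _); apply/val_inj. Qed.

Lemma mulmx2E m n (A : 'M[R]_(m, 2)) (B : 'M[R]_(2, n)) i j :
  (A *m B) i j = A i i0 * B i0 j + A i i1 * B i1 j.
Proof. by rewrite mxE sum_ord2. Qed.

Lemma matrix2P A B : A i0 i0 = B i0 i0 -> A i0 i1 = B i0 i1 ->
  A i1 i0 = B i1 i0 -> A i1 i1 = B i1 i1 -> A = B.
Proof.
move=> e00 e01 e10 e11; apply/matrixP => i j.
by case: (ord2_cases i) => ->; case: (ord2_cases j) => ->.
Qed.

Lemma det_mx2 A : \det A = A i0 i0 * A i1 i1 - A i0 i1 * A i1 i0.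
Proof.
rewrite (expand_det_row _ i0) sum_ord2 /cofactor !det_mx11 !mxE /=.
have -> : lift i0 (0 : 'I_1) = i1 by apply/val_inj.
have -> : lift i1 (0 : 'I_1) = i0 by apply/val_inj.
by rewrite expr0 expr1; lra.
Qed.

Lemma unitmx2P A : reflect (\det A != 0) (A \in unitmx).
Proof. by rewrite unitmxE unitfE; apply: idP. Qed.

Lemma invmx_eq A B : A *m B = 1%:M -> invmx A = B.
Proof.
move=> AB; have [Au _] := mulmx1_unit AB.
by rewrite -[invmx A]mulmx1 -AB mulmxA mulVmx // mul1mx.
Qed.

Definition frob2 A := A i0 i0 ^+ 2 + A i0 i1 ^+ 2 + A i1 i0 ^+ 2 + A i1 i1 ^+ 2.

Lemma frob2E A : \tr (A^T *m A) = frob2 A.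
Proof. by rewrite /mxtrace sum_ord2 !mulmx2E !mxE /frob2; lra. Qed.

Lemma frob2_ge0 A : 0 <= frob2 A.
Proof. by rewrite /frob2; nra. Qed.

Lemma frob2_mul A B : frob2 (A *m B) <= frob2 A * frob2 B.
Proof.
have cs (x0 x1 y0 y1 : R) : (x0 * y0 + x1 * y1) ^+ 2 <= (x0 ^+ 2 + x1 ^+ 2) * (y0 ^+ 2 + y1 ^+ 2).
  by have := sqr_ge0 (x0 * y1 - x1 * y0); nra.
rewrite /frob2 !mulmx2E.
have := cs (A i0 i0) (A i0 i1) (B i0 i0) (B i1 i0).
have := cs (A i0 i0) (A i0 i1) (B i0 i1) (B i1 i1).
have := cs (A i1 i0) (A i1 i1) (B i0 i0) (B i1 i0).
have := cs (A i1 i0) (A i1 i1) (B i0 i1) (B i1 i1).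
lra.
Qed.

(* [frob2 A -+ 2 det A] are the sums of squares [(a -+ d)^2 + (b +- c)^2]. *)
Lemma sv_radicand_ge0 A : 0 <= frob2 A ^+ 2 - 4 * (\det A) ^+ 2.
Proof.
rewrite det_mx2 /frob2.
set a := A i0 i0; set b := A i0 i1; set c := A i1 i0; set d := A i1 i1.
have := sqr_ge0 (a - d); have := sqr_ge0 (b + c).
have := sqr_ge0 (a + d); have := sqr_ge0 (b - c).
nra.
Qed.

Lemma sv1_sv2_frob2 A :
  [/\ sv1 A * sv2 A = `|\det A|, sv1 A ^+ 2 <= frob2 A & 0 <= sv1 A].
Proof.
rewrite /sv1 /sv2 /sv_disc frob2E.
have hT := frob2_ge0 A.
set D := Num.sqrt (frob2 A ^+ 2 - _).
have DD : D ^+ 2 = frob2 A ^+ 2 - 4 * (\det A) ^+ 2 by rewrite sqr_sqrtr ?sv_radicand_ge0.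
have D0 : 0 <= D by apply: sqrtr_ge0.
have DT : D <= frob2 A by nra.
split; last exact: sqrtr_ge0.
- rewrite -sqrtrM; last by apply: divr_ge0; lra.
  rewrite -(sqrtr_sqr (\det A)); congr Num.sqrt.
  have -> : (frob2 A + D) / 2 * ((frob2 A - D) / 2) = (frob2 A ^+ 2 - D ^+ 2) / 4 by field.
  by rewrite DD; field.
- by rewrite sqr_sqrtr; [lra | apply: divr_ge0; lra].
Qed.

Definition uppertri M := M i1 i0 = 0.

Lemma uppertri_mul {A B} : uppertri A -> uppertri B ->
  [/\ uppertri (A *m B), (A *m B) i0 i0 = A i0 i0 * B i0 i0
    & (A *m B) i1 i1 = A i1 i1 * B i1 i1].
Proof. by rewrite /uppertri !mulmx2E => -> ->; split; ring. Qed.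

Lemma uppertri1 : [/\ uppertri 1%:M, (1%:M : 'M[R]_2) i0 i0 = 1 & (1%:M : 'M[R]_2) i1 i1 = 1].
Proof. by rewrite /uppertri !mxE. Qed.

Lemma det_uppertri M : uppertri M -> \det M = M i0 i0 * M i1 i1.
Proof. by rewrite det_mx2 /uppertri => ->; rewrite mulr0 subr0. Qed.

Lemma uppertri_exp {M} k : uppertri M ->
  [/\ uppertri (M ^+ k), (M ^+ k) i0 i0 = M i0 i0 ^+ k & (M ^+ k) i1 i1 = M i1 i1 ^+ k].
Proof.
move=> uM; elim: k => [|k [uMk e0 e1]]; first by rewrite !expr0; exact: uppertri1.
by rewrite !exprS -mulmxE; have [? -> ->] := uppertri_mul uM uMk; rewrite e0 e1.
Qed.

Lemma uppertri_invmx M : M \in unitmx -> uppertri M ->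
  [/\ uppertri (invmx M), invmx M i0 i0 = (M i0 i0)^-1 & invmx M i1 i1 = (M i1 i1)^-1].
Proof.
move=> Mu uM; have /unitmx2P := Mu; rewrite det_uppertri // mulf_eq0 negb_or.
case/andP => a0 d0.
have uMV : uppertri (invmx M).
  have := congr1 (fun X : 'M[R]_2 => X i1 i0) (mulVmx Mu).
  rewrite /= mulmx2E uM mulr0 addr0 !mxE /= => /eqP.
  by rewrite mulf_eq0 (negbTE a0) orbF => /eqP.
have [_ e0 e1] := uppertri_mul uMV uM; rewrite mulVmx // !mxE /= in e0 e1.
by split => //; [apply: (mulIf a0) | apply: (mulIf d0)]; rewrite mulVf.
Qed.

(** [rebase P M] is the matrix of [M] in the basis formed by the columns of [P]. *)
Definition rebase P M := invmx P *m M *m P.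

Lemma det_rebase P M : P \in unitmx -> \det (rebase P M) = \det M.
Proof.
move=> Pu; rewrite !det_mulmx det_inv mulrC mulrA mulrC mulrA.
by rewrite mulfK // -unitfE -unitmxE.
Qed.

Lemma rebase_unit P M : P \in unitmx -> (rebase P M \in unitmx) = (M \in unitmx).
Proof. by move=> Pu; rewrite !unitmxE det_rebase. Qed.

Lemma rebaseK P M : P \in unitmx -> P *m rebase P M *m invmx P = M.
Proof. by move=> Pu; rewrite /rebase !mulmxA mulmxV // mul1mx mulmxK. Qed.

Lemma rebaseVK P M : P \in unitmx -> rebase P (P *m M *m invmx P) = M.
Proof. by move=> Pu; rewrite /rebase !mulmxA mulVmx // mul1mx mulmxKV. Qed.

Lemma rebaseM P A B : P \in unitmx -> rebase P (A *m B) = rebase P A *m rebase P B.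
Proof. by move=> Pu; rewrite /rebase !mulmxA (mulmxK Pu). Qed.

Lemma rebaseX P M k : P \in unitmx -> rebase P (M ^+ k) = rebase P M ^+ k.
Proof.
move=> Pu; elim: k => [|k IH]; first by rewrite !expr0 /rebase mulmx1 mulVmx.
by rewrite !exprS -!mulmxE rebaseM // IH.
Qed.

Lemma rebaseZ P c M : rebase P (c *: M) = c *: rebase P M.
Proof. by rewrite /rebase -scalemxAr -scalemxAl. Qed.

Lemma rebase_invmx P M : P \in unitmx -> M \in unitmx ->
  rebase P (invmx M) = invmx (rebase P M).
Proof.
move=> Pu Mu; apply/esym/invmx_eq.
by rewrite /rebase !mulmxA (mulmxK Pu) (mulmxK Mu) mulVmx.
Qed.

Lemma rebase_mul P Q M : P \in unitmx -> Q \in unitmx ->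
  rebase (P *m Q) M = rebase Q (rebase P M).
Proof.
move=> Pu Qu; rewrite /rebase (_ : invmx (P *m Q) = invmx Q *m invmx P) ?mulmxA //.
by apply: invmx_eq; rewrite -mulmxA (mulmxA Q) mulmxV // mul1mx mulmxV.
Qed.

Lemma frob2_rebase P M : P \in unitmx ->
  frob2 M <= frob2 P * frob2 (invmx P) * frob2 (rebase P M).
Proof.
move=> Pu; rewrite -{1}(rebaseK _ M Pu).
apply: le_trans (frob2_mul _ _) _.
have := frob2_mul P (rebase P M); have := frob2_ge0 (invmx P).
have := frob2_ge0 (P *m rebase P M); have := frob2_ge0 P.
have := frob2_ge0 (rebase P M); nra.
Qed.

(* For [g = b / (a - d)], the projection onto the [a]-eigenline of
   [[a, b]; [0, d]] along the [d]-eigenline. *)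
Definition eig_proj (g : R) : 'M[R]_2 := delta_mx i0 i0 + g *: delta_mx i0 i1.

Lemma eig_projE g : [/\ eig_proj g i0 i0 = 1, eig_proj g i0 i1 = g,
  eig_proj g i1 i0 = 0 & eig_proj g i1 i1 = 0].
Proof. by rewrite !mxE /=; split; ring. Qed.

Lemma uppertri_exp_spectral {G} k : uppertri G -> G i0 i0 != G i1 i1 ->
  let E := eig_proj (G i0 i1 / (G i0 i0 - G i1 i1)) in
  G ^+ k = G i0 i0 ^+ k *: E + G i1 i1 ^+ k *: (1%:M - E).
Proof.
move=> uG ad E.
have ad0 : G i0 i0 - G i1 i1 != 0 by rewrite subr_eq0.
have EG : E *m G = G i0 i0 *: E.
  by apply: matrix2P; rewrite !mulmx2E !mxE /= ?uG; field.
have E'G : (1%:M - E) *m G = G i1 i1 *: (1%:M - E).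
  by rewrite mulmxBl mul1mx EG; apply: matrix2P; rewrite !mxE /= ?uG; field.
elim: k => [|k IH]; first by rewrite !expr0 !scale1r addrC subrK.
by rewrite exprSr -mulmxE IH mulmxDl -!scalemxAl EG E'G !scalerA -!exprSr.
Qed.

Lemma entry_mulmx_continuous (Q P : 'M[R]_2) i j :
  continuous (fun M : 'M[R]_2 => (Q *m M *m P) i j).
Proof.
have lin k l (c : R) : continuous (fun M : 'M[R]_2 => c * M k l).
  by move=> M; apply: continuousM; [exact: cst_continuous | exact: coord_continuous].
have -> : (fun M : 'M[R]_2 => (Q *m M *m P) i j) = (fun M =>
    (Q i i0 * P i0 j) * M i0 i0 + (Q i i1 * P i0 j) * M i1 i0
    + (Q i i0 * P i1 j) * M i0 i1 + (Q i i1 * P i1 j) * M i1 i1).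
  by apply/funext => M; rewrite !mulmx2E; ring.
move=> M.
apply: (@continuousD _ _ _ (fun M => _ + _ + _) (fun M => _)); last exact: lin.
apply: (@continuousD _ _ _ (fun M => _ + _) (fun M => _)); last exact: lin.
by apply: (@continuousD _ _ _ (fun M => _) (fun M => _)); exact: lin.
Qed.

Lemma closed_rebase_diag_le P :
  closed [set M | uppertri (rebase P M) /\ `|rebase P M i1 i1| <= `|rebase P M i0 i0|].
Proof.
have f_cont := entry_mulmx_continuous (invmx P) P.
have nf_cont i j : continuous (fun M => `|rebase P M i j|).
  by move=> M; exact: cvg_norm (f_cont i j M).
apply: closedI.
  apply: (@preimage_closed _ _ (fun M : 'M[R]_2 => rebase P M i1 i0) [set x | x = 0]).
    by move=> M _; exact: f_cont.
  exact: closed_eq.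
have cl : closed ((fun M : 'M[R]_2 => `|rebase P M i1 i1| - `|rebase P M i0 i0|)
                    @^-1` [set x | x <= 0]).
  apply: preimage_closed; last exact: closed_le.
  by move=> M _; exact: cvgB (nf_cont i1 i1 M) (nf_cont i0 i0 M).
by move: cl; congr closed; apply/seteqP; split => M /=; rewrite subr_le0.
Qed.

Lemma closure_geometric (S : set 'M[R]_2) (M C : 'M[R]_2) (r : R) :
  `|r| < 1 -> (forall k, S (M + r ^+ k *: C)) -> closure S M.
Proof.
move=> r1 S_u.
apply: (@closed_cvg _ _ \oo _ (fun k => M + r ^+ k *: C)); first exact: closed_closure.
  by near=> k; apply: subset_closure.
rewrite -[X in _ --> X]addr0 -(scale0r C).
apply: cvgD; first exact: cvg_cst.
by apply: cvgZ; [exact: cvg_expr | exact: cvg_cst].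
Unshelve. all: by end_near.
Qed.

Lemma det_rank1 {M} : \rank M = 1%N -> \det M = 0.
Proof.
move=> r1; apply/eqP/negPn/negP => d0.
by move: r1; rewrite mxrank_unit //; apply/unitmx2P.
Qed.

Lemma rank_mx2_eq1 M : M != 0 -> \det M = 0 -> \rank M = 1%N.
Proof.
move=> M0 detM; have := rank_leq_row M; rewrite -mxrank_eq0 in M0.
have : ~~ row_free M by rewrite row_free_unit; apply/unitmx2P; rewrite detM eqxx.
by rewrite /row_free; case: (\rank M) M0 => [|[|[|]]].
Qed.

(* If [M] has, in the basis [P], a zero second row, its range is the first
   basis line; [<< M^T >>] is how the range of [M] is recorded in [XF]. *)
Lemma genmx_rebase_row0 P M : P \in unitmx -> \rank M = 1%N ->
  uppertri (rebase P M) -> rebase P M i1 i1 = 0 ->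
  (<< M^T >> = << (col i0 P)^T >>)%MS.
Proof.
rewrite /uppertri => Pu r1 r10 r11.
have sub : (M^T <= (col i0 P)^T)%MS.
  apply/submxP; exists (\matrix_(i < 2, j < 1) (rebase P M *m invmx P) i0 i).
  apply/matrixP => i j; rewrite -{1}(rebaseK P M Pu) !mxE big_ord1 !mxE.
  by rewrite !sum_ord2 ![(P *m _) _ _]mulmx2E r10 r11; ring.
apply/genmxP; have [le_r <-] := mxrank_leqif_eq sub.
by rewrite mxrank_tr r1 in le_r *; rewrite eqn_leq le_r rank_leq_row.
Qed.

Lemma vnorm_le_sum (y : 'cV[R]_2) : vnorm y <= `|y i0 ord0| + `|y i1 ord0|.
Proof.
rewrite /vnorm -(ger0_norm (addr_ge0 (normr_ge0 _) (normr_ge0 _))) -sqrtr_sqr.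
rewrite ler_sqrt ?sqr_ge0 // -(real_normK (num_real (y i0 ord0))).
rewrite -(real_normK (num_real (y i1 ord0))).
by have := normr_ge0 (y i0 ord0); have := normr_ge0 (y i1 ord0); nra.
Qed.

Lemma vnormZ (c : R) (u : 'cV[R]_2) : vnorm (c *: u) = `|c| * vnorm u.
Proof. by rewrite /vnorm !mxE -sqrtr_sqr -sqrtrM ?sqr_ge0 //; congr Num.sqrt; ring. Qed.

Lemma vnorm_gt0 {v : 'cV[R]_2} : v != 0 -> 0 < vnorm v.
Proof.
move=> v0; rewrite sqrtr_gt0 lt_def addr_ge0 ?sqr_ge0 // andbT.
apply: contraNN v0 => /eqP s0; apply/eqP/matrixP => i j.
have -> : j = ord0 by apply/val_inj; case: j => [[]].
by rewrite !mxE; have := sqr_ge0 (v i0 ord0); have := sqr_ge0 (v i1 ord0);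
  case: (ord2_cases i) => ->; nra.
Qed.

(* The supremum defining [opnorm A] is bounded by the sum of the [|A i j|]. *)
Lemma opnorm_eigen {A} {v : 'cV[R]_2} {l} : v != 0 -> A *m v = l *: v -> `|l| <= opnorm A.
Proof.
move=> v0 Av; set u := (vnorm v)^-1 *: v.
have vp := vnorm_gt0 v0.
have u1 : vnorm u = 1 by rewrite vnormZ ger0_norm ?invr_ge0 ?ltW // mulVf ?gt_eqF.
have Au : A *m u = l *: u by rewrite -scalemxAr Av !scalerA mulrC.
rewrite /opnorm; apply: ub_le_sup; last by exists u => //; rewrite Au vnormZ u1 mulr1.
exists (`|A i0 i0| + `|A i0 i1| + `|A i1 i0| + `|A i1 i1|) => _ [x /= x1 <-].
have xk k : `|x k ord0| <= 1.
  have : x i0 ord0 ^+ 2 + x i1 ord0 ^+ 2 = 1.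
    by rewrite -[LHS]sqr_sqrtr ?addr_ge0 ?sqr_ge0 // -/(vnorm x) x1 expr1n.
  rewrite -(ler_pXn2r (n := 2)) ?nnegrE // expr1n real_normK ?num_real //.
  by have := sqr_ge0 (x i0 ord0); have := sqr_ge0 (x i1 ord0); case: (ord2_cases k) => ->; lra.
apply: le_trans (vnorm_le_sum _) _; rewrite !mulmx2E.
have row a b : `|a * x i0 ord0 + b * x i1 ord0| <= `|a| + `|b|.
  apply: le_trans (ler_normD _ _) _; rewrite !normrM.
  have := xk i0; have := xk i1; have := normr_ge0 a; have := normr_ge0 b.
  by have := normr_ge0 (x i0 ord0); have := normr_ge0 (x i1 ord0); nra.
by have := row (A i0 i0) (A i0 i1); have := row (A i1 i0) (A i1 i1); lra.
Qed.

(** The basis [v], [v] rotated by a quarter turn. *)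
Definition rot_basis (v : 'cV[R]_2) : 'M[R]_2 :=
  \matrix_(i, j) if j == i0 then v i ord0 else if i == i0 then - v i1 ord0 else v i0 ord0.

Lemma rot_basis_unit {v} : v != 0 -> rot_basis v \in unitmx.
Proof.
move=> v0; apply/unitmx2P; rewrite det_mx2 !mxE /=.
have := vnorm_gt0 v0; rewrite sqrtr_gt0; apply: contra_ltN => /eqP d0.
by rewrite !expr2; nra.
Qed.

Lemma rebase_rot_basis {A v l} : v != 0 -> A *m v = l *: v ->
  uppertri (rebase (rot_basis v) A) /\ rebase (rot_basis v) A i0 i0 = l.
Proof.
move=> v0 Av; set P := rot_basis v.
have Pu := rot_basis_unit v0.
have AP i : (A *m P) i i0 = l * P i i0.
  have := congr1 (fun X : 'cV[R]_2 => X i ord0) Av.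
  by rewrite /= !mulmx2E !mxE /=.
have col0 i : rebase P A i i0 = l * (1%:M : 'M[R]_2) i i0.
  by rewrite /rebase -mulmxA mulmx2E !AP -(mulVmx Pu) mulmx2E; ring.
by rewrite /uppertri !col0 !mxE /= mulr0 mulr1.
Qed.

Lemma rebase_swap M (S := tperm_mx i0 i1 : 'M[R]_2) :
  [/\ rebase S M i1 i0 = M i0 i1, rebase S M i0 i0 = M i1 i1 & rebase S M i1 i1 = M i0 i0].
Proof.
have SS : S *m S = 1%:M by rewrite -perm_mxM tperm2 perm_mx1.
rewrite /rebase (invmx_eq _ _ SS) -xrowE -xcolE !mxE.
by rewrite ?tpermL ?tpermR.
Qed.

Section UppertriPowers.
Variables (M : 'M[R]_2) (m c : R).
Hypotheses (uM : uppertri M) (a_le : `|M i0 i0| <= m) (d_le : `|M i1 i1| <= m)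
  (b_le : `|M i0 i1| <= c * m) (c0 : 0 <= c).

Lemma uppertri_exp_offdiag_le k : `|(M ^+ k) i0 i1| <= k%:R * c * m ^+ k.
Proof.
have m0 : 0 <= m := le_trans (normr_ge0 _) a_le.
elim: k => [|k IH]; first by rewrite expr0 !mxE /= normr0 !mul0r.
have [_ _ dk] := uppertri_exp k uM.
rewrite exprS -mulmxE mulmx2E dk; apply: le_trans (ler_normD _ _) _.
have dk_le : `|M i1 i1 ^+ k| <= m ^+ k by rewrite normrX lerXn2r // ?nnegrE.
have := ler_pM (normr_ge0 _) (normr_ge0 _) a_le IH.
have := ler_pM (normr_ge0 _) (normr_ge0 _) b_le dk_le.
rewrite !normrM exprS -natr1; lra.
Qed.

Lemma frob2_uppertri_exp k : frob2 (M ^+ k) <= (2 + k%:R ^+ 2 * c ^+ 2) * (m ^+ k) ^+ 2.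
Proof.
have m0 : 0 <= m := le_trans (normr_ge0 _) a_le.
rewrite /frob2; have [uMk -> ->] := uppertri_exp k uM; rewrite uMk expr0n /= addr0.
have sqr_le x : `|x| <= m -> (x ^+ k) ^+ 2 <= (m ^+ k) ^+ 2.
  by move=> xm; rewrite -real_normK ?num_real // normrX !lerXn2r ?nnegrE ?exprn_ge0.
have := sqr_le _ a_le; have := sqr_le _ d_le.
have : (M ^+ k) i0 i1 ^+ 2 <= k%:R ^+ 2 * c ^+ 2 * (m ^+ k) ^+ 2.
  rewrite -real_normK ?num_real // -!exprMn lerXn2r ?nnegrE ?uppertri_exp_offdiag_le //.
  by rewrite !mulr_ge0 ?ler0n ?exprn_ge0.
lra.
Qed.

End UppertriPowers.

(* Domination forces the smaller diagonal entry of a triangular matrix to be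
   exponentially smaller along powers; otherwise [|det M^k|] would outgrow the
   polynomially corrected bound [frob2 (M^k)]. *)
Lemma uppertri_diag_gap M (X s : R) : uppertri M -> 0 <= X -> 0 < s ->
  (forall k, `|\det (M ^+ k)| <= X * s ^+ k * frob2 (M ^+ k)) ->
  `|M i1 i1| <= `|M i0 i0| -> `|M i1 i1| <= s * `|M i0 i0|.
Proof.
move=> uM X0 s0 dom d_le.
have [a0|a0] := eqVneq (M i0 i0) 0.
  by move: d_le; rewrite a0 normr0 mulr0.
set m := `|M i0 i0|; have m0 : 0 < m by rewrite normr_gt0.
set c := `|M i0 i1| / m.
have c0 : 0 <= c by rewrite divr_ge0 // ltW.
have b_le : `|M i0 i1| <= c * m by rewrite divfK // gt_eqF.
rewrite leNgt; apply/negP => gap.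
set q := `|M i1 i1| / (s * m).
have q1 : 1 < q by rewrite ltr_pdivlMr ?mulr_gt0 // mul1r.
have X'0 : 0 <= X * (2 + c ^+ 2) by rewrite mulr_ge0 // addr_ge0 ?sqr_ge0.
have [k hk] := exp_gt_quadratic q1 X'0.
have t0 : 0 < s ^+ k * (m ^+ k) ^+ 2 by rewrite mulr_gt0 ?exprn_gt0.
have [uMk ak dk] := uppertri_exp k uM.
have detk : `|\det (M ^+ k)| = q ^+ k * (s ^+ k * (m ^+ k) ^+ 2).
  rewrite det_uppertri // ak dk normrM !normrX.
  rewrite (_ : `|M i1 i1| = q * (s * m)); last by rewrite divfK // gt_eqF ?mulr_gt0.
  by rewrite !exprMn; ring.
have Xs0 : 0 <= X * s ^+ k by rewrite mulr_ge0 // exprn_ge0 // ltW.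
have : q ^+ k * (s ^+ k * (m ^+ k) ^+ 2) <= X * (2 + k%:R ^+ 2 * c ^+ 2) * (s ^+ k * (m ^+ k) ^+ 2).
  rewrite -detk; apply: le_trans (dom k) _.
  apply: le_trans (ler_wpM2l Xs0 (@frob2_uppertri_exp M m c uM (lexx m) d_le b_le c0 k)) _.
  by rewrite le_eqVlt; apply/orP; left; apply/eqP; ring.
rewrite ler_pM2r //.
have : 2 + k%:R ^+ 2 * c ^+ 2 <= (2 + c ^+ 2) * (1 + k%:R ^+ 2).
  by have := sqr_ge0 c; have := sqr_ge0 (k%:R : R); nra.
move: hk; have := sqr_ge0 c; nra.
Qed.

End Matrix2.

Section Words.
Context {R : realType} {N : nat}.
Implicit Types (F : 'I_N -> 'M[R]_2) (P : 'M[R]_2).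

Lemma dominated_det_frob2 F : dominated F ->
  exists C tau : R, 0 < C /\ 0 < tau < 1 /\
    forall w, `|\det (word_prod F w)| <= C * tau ^+ size w * frob2 (word_prod F w).
Proof.
move=> [C [tau [C0 [/andP[tau0 tau1] dom]]]]; exists C, tau.
split => //; split; first by rewrite tau0 tau1.
move=> w; have [<- sv1_le sv1_0] := sv1_sv2_frob2 (word_prod F w).
have := dom w; have : 0 <= C * tau ^+ size w by rewrite mulr_ge0 ?exprn_ge0; lra.
move: (sv2 _) => s2; nra.
Qed.

Lemma word_prod_cons F i w : word_prod F (i :: w) = F i *m word_prod F w.
Proof. by rewrite /word_prod big_cons mulmxE. Qed.

Lemma uppertri_word_prod F w : (forall i, uppertri (F i)) ->
  [/\ uppertri (word_prod F w), word_prod F w i0 i0 = \prod_(i <- w) F i i0 i0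
    & word_prod F w i1 i1 = \prod_(i <- w) F i i1 i1].
Proof.
move=> uF; elim: w => [|i w [uw e0 e1]]; first by rewrite /word_prod !big_nil; exact: uppertri1.
by rewrite word_prod_cons !big_cons; have [? -> ->] := uppertri_mul (uF i) uw; rewrite e0 e1.
Qed.

Lemma rebase_word_prod P F w : P \in unitmx ->
  rebase P (word_prod F w) = word_prod (fun i => rebase P (F i)) w.
Proof.
move=> Pu; elim: w => [|i w IH]; first by rewrite /word_prod !big_nil /rebase mulmx1 mulVmx.
by rewrite !word_prod_cons rebaseM // IH.
Qed.

Lemma word_prod_flatten_nseq F k w :
  word_prod F (flatten (nseq k w)) = word_prod F w ^+ k.
Proof.
rewrite /word_prod; elim: k => [|k IH]; first by rewrite big_nil expr0.
by rewrite /= big_cat IH exprS.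
Qed.

Lemma size_flatten_nseq (T : Type) k (w : seq T) : size (flatten (nseq k w)) = (k * size w)%N.
Proof. by elim: k => //= k IH; rewrite size_cat IH mulSn. Qed.

End Words.

Section Triangularized.
Context {R : realType} {N : nat} {A : 'I_N -> 'M[R]_2} {P : 'M[R]_2}.
Hypotheses (P_unit : P \in unitmx) (A_unit : forall i, A i \in unitmx)
  (A_tri : forall i, uppertri (rebase P (A i))).

Local Notation B i := (rebase P (A i)).
Local Notation ratio i := (`|B i i1 i1| / `|B i i0 i0|).

Lemma rebase_diag_neq0 i : B i i0 i0 != 0 /\ B i i1 i1 != 0.
Proof.
have /unitmx2P := A_unit i; rewrite -(det_rebase _ _ P_unit) det_uppertri //.
by rewrite mulf_eq0 negb_or => /andP.
Qed.

Lemma dominated_diag_ratio : dominated A ->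
  exists tau : R, 0 < tau < 1 /\ forall w,
    \prod_(i <- w) ratio i <= 1 -> \prod_(i <- w) ratio i <= tau ^+ size w.
Proof.
move=> /dominated_det_frob2 [C [tau [C0 [tau01 dom]]]]; exists tau; split => // w.
have tau0 : 0 < tau by case/andP: tau01.
set W := word_prod (fun i => B i) w.
have [uW aW dW] := uppertri_word_prod _ w A_tri.
have a0 : W i0 i0 != 0.
  by rewrite aW prodf_seq_neq0; apply/allP => i _; case: (rebase_diag_neq0 i).
rewrite prodf_div -!normr_prod -aW -dW !ler_pdivrMr ?normr_gt0 // mul1r => le_da.
apply: (@uppertri_diag_gap _ _ (C * frob2 P * frob2 (invmx P))) => //.
- by rewrite !mulr_ge0 ?frob2_ge0 // ltW.
- exact: exprn_gt0.
move=> k; rewrite /W -rebase_word_prod // -rebaseX // -word_prod_flatten_nseq det_rebase //.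
apply: le_trans (dom _) _; rewrite size_flatten_nseq mulnC exprM.
have Ct0 : 0 <= C * (tau ^+ size w) ^+ k by rewrite mulr_ge0 ?exprn_ge0 // ltW.
apply: le_trans (ler_wpM2l Ct0 (frob2_rebase _ _ P_unit)) _.
by rewrite le_eqVlt; apply/orP; left; apply/eqP; ring.
Qed.

Lemma dominated_diag_order : dominated A ->
  (forall i, `|B i i1 i1| < `|B i i0 i0|) \/ (forall i, `|B i i0 i0| < `|B i i1 i1|).
Proof.
move=> /dominated_diag_ratio [tau [tau01 dom]].
have a0 i : 0 < `|B i i0 i0| by rewrite normr_gt0; case: (rebase_diag_neq0 i).
have r0 i : 0 < ratio i by rewrite divr_gt0 ?normr_gt0; case: (rebase_diag_neq0 i).
have r_neq1 i : ratio i != 1.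
  apply/eqP => r1; have := dom [:: i]; rewrite big_seq1 r1 expr1 lexx => /(_ isT).
  by case/andP: tau01; lra.
have [lt1|/existsNP[i /negP ri]] := pselect (forall i, ratio i < 1).
  by left => i; rewrite -[X in _ < X]mul1r -ltr_pdivrMr.
right => j; rewrite -[X in X < _]mul1r -ltr_pdivlMr // ltNge le_eqVlt (negbTE (r_neq1 j)) /=.
apply/negP => rj.
have ri1 : 1 < ratio i by rewrite lt_neqAle eq_sym r_neq1 leNgt.
have [n [m []]] := ratio_walk tau01 (introT andP (conj (r0 j) rj)) ri1.
have := dom (nseq n j ++ nseq m i).
rewrite big_cat !big_nseq !iter_mulr_1 size_cat !size_nseq => dom_nm /dom_nm.
by move=> /le_lt_trans /[apply]; rewrite ltxx.
Qed.

Section InverseOrder.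
Hypothesis lt_ad : forall i, `|B i i0 i0| < `|B i i1 i1|.

Lemma furst_set_rebase_diag_le X : furst_set A X ->
  uppertri (rebase P X) /\ `|rebase P X i1 i1| <= `|rebase P X i0 i0|.
Proof.
move=> [c [w ->]].
have Binv i : [/\ uppertri (rebase P (invmx (A i))),
    rebase P (invmx (A i)) i0 i0 = (B i i0 i0)^-1 & rebase P (invmx (A i)) i1 i1 = (B i i1 i1)^-1].
  by rewrite rebase_invmx //; apply: uppertri_invmx; rewrite ?rebase_unit.
have uG i : uppertri (rebase P (invmx (A i))) by case: (Binv i).
have [uW aW dW] := uppertri_word_prod _ w uG.
rewrite -/(word_prod (fun i => invmx (A i)) w) rebaseZ rebase_word_prod //.
rewrite /uppertri !mxE uW mulr0 !normrM; split => //; apply: ler_wpM2l => //.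
rewrite aW dW !normr_prod; apply: ler_prod => i _.
have [a0 d0] := rebase_diag_neq0 i.
by have [_ -> ->] := Binv i; rewrite normr_ge0 !normfV ltW // ltf_pV2 ?posrE ?normr_gt0 ?lt_ad.
Qed.

Lemma closure_furst_set_rebase_diag_le M : closure (furst_set A) M ->
  uppertri (rebase P M) /\ `|rebase P M i1 i1| <= `|rebase P M i0 i0|.
Proof.
move=> clM; set S := [set M | uppertri (rebase P M) /\ `|rebase P M i1 i1| <= `|rebase P M i0 i0|].
have /closure_id S_cl : closed S := closed_rebase_diag_le P.
by change (S M); rewrite S_cl; exact: closureS furst_set_rebase_diag_le _ clM.
Qed.

(* The normalized powers of [invmx (A j)] converge to a rank-one matrix: in the
   basis [P] they are [E + r ^+ k *: (1 - E)] with [|r| < 1]. *)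
Lemma closure_furst_set_rank1 (j : 'I_N) :
  exists M, closure (furst_set A) M /\ \rank M = 1%N.
Proof.
set G := rebase P (invmx (A j)).
have [a0 d0] := rebase_diag_neq0 j.
have [uG aG dG] : [/\ uppertri G, G i0 i0 = (B j i0 i0)^-1 & G i1 i1 = (B j i1 i1)^-1].
  by rewrite /G rebase_invmx //; apply: uppertri_invmx; rewrite ?rebase_unit.
have lt_da : `|G i1 i1| < `|G i0 i0|.
  by rewrite aG dG !normfV ltf_pV2 ?posrE ?normr_gt0 ?lt_ad.
have Ga0 : G i0 i0 != 0 by rewrite aG invr_eq0.
have ad : G i0 i0 != G i1 i1 by apply: contraTneq lt_da => ->; rewrite ltxx.
have [E00 _ E10 E11] := eig_projE (G i0 i1 / (G i0 i0 - G i1 i1)).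
set E := eig_proj (G i0 i1 / (G i0 i0 - G i1 i1)) in E00 E10 E11 *.
exists (P *m E *m invmx P); split.
  apply: (@closure_geometric _ _ _ (P *m (1%:M - E) *m invmx P) (G i1 i1 / G i0 i0)).
    by rewrite normrM normfV ltr_pdivrMr ?mul1r ?normr_gt0.
  move=> k; exists (G i0 i0 ^- k), (flatten (nseq k [:: j])).
  rewrite -/(word_prod (fun i => invmx (A i)) _) word_prod_flatten_nseq /word_prod big_seq1.
  rewrite -(rebaseK _ (invmx (A j) ^+ k) P_unit) rebaseX // -/G (uppertri_exp_spectral k uG ad).
  rewrite -/E [in RHS]scalemxAl [in RHS]scalemxAr [in LHS]scalemxAl [in LHS]scalemxAr.
  rewrite -mulmxDl -mulmxDr; congr (_ *m _ *m _).
  by rewrite [in RHS]scalerDr !scalerA mulVf ?expf_neq0 // scale1r exprMn exprVn mulrC.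
apply: rank_mx2_eq1.
  apply: contraNneq (oner_neq0 R) => PE0.
  have := congr1 (fun X => rebase P X i0 i0) PE0.
  by rewrite /= rebaseVK // E00 /rebase mulmx0 mul0mx mxE => ->.
by rewrite -(det_rebase _ _ P_unit) rebaseVK // det_mx2 E10 E11; ring.
Qed.

Lemma XF_rebase (j : 'I_N) : XF A = [set << (col i0 P)^T >>%MS].
Proof.
have range M : closure (furst_set A) M -> \rank M = 1%N ->
    (<< M^T >> = << (col i0 P)^T >>)%MS.
  move=> clM r1; have [uM le_da] := closure_furst_set_rebase_diag_le _ clM.
  apply: genmx_rebase_row0 => //.
  have := det_rank1 r1; rewrite -(det_rebase _ M P_unit) det_uppertri //.
  move=> /eqP; rewrite mulf_eq0 => /orP[/eqP a0|/eqP //].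
  by move: le_da; rewrite a0 normr0 normr_le0 => /eqP.
have [M0 [clM0 rM0]] := closure_furst_set_rank1 j.
rewrite predeqE => L; split => [[M [clM [r1 ->]]]|->]; first exact: range.
by exists M0; do 2!split => //; exact/esym/range.
Qed.

End InverseOrder.

Lemma rebase_diag_order_XF : dominated A -> ~ (exists L, XF A = [set L]) ->
  forall i, `|B i i1 i1| < `|B i i0 i0|.
Proof.
move=> dom nXF i; have [//|lt_ad] := dominated_diag_order dom.
by case: nXF; exists (<< (col i0 P)^T >>%MS); exact: XF_rebase lt_ad i.
Qed.

End Triangularized.

Lemma dominated_not_diagonalizable {R : realType} {N} {A : 'I_N -> 'M[R]_2} :
  (0 < N)%N -> (forall i, A i \in unitmx) -> dominated A ->
  ~ (exists L, XF A = [set L]) ->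
  ~ (exists Q, Q \in unitmx /\ forall i, is_diag_mx (rebase Q (A i))).
Proof.
move=> N_gt0 A_unit dom nXF [Q [Q_unit Q_diag]].
have QS_unit : Q *m tperm_mx i0 i1 \in unitmx by rewrite unitmx_mul Q_unit unitmx_perm.
have Q_offdiag i j k : j != k -> rebase Q (A i) j k = 0.
  by move=> jk; have /is_diag_mxP := Q_diag i; apply.
have Q_tri i : uppertri (rebase Q (A i)) by exact: Q_offdiag.
have QS_tri i : uppertri (rebase (Q *m tperm_mx i0 i1) (A i)).
  rewrite /uppertri rebase_mul ?unitmx_perm //.
  by case: (rebase_swap (rebase Q (A i))) => e _ _; rewrite e; exact: Q_offdiag.
have i := Ordinal N_gt0.
have := rebase_diag_order_XF QS_unit A_unit QS_tri dom nXF i.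
rewrite rebase_mul ?unitmx_perm //; case: (rebase_swap (rebase Q (A i))) => _ -> ->.
by rewrite ltNge (ltW (rebase_diag_order_XF Q_unit A_unit Q_tri dom nXF i)).
Qed.

Theorem mainTheorem11 (R : realType) (N : nat) (A : 'I_N -> 'M[R]_2) :
  (0 < N)%N ->
  (forall i, A i \in unitmx) ->
  dominated A ->
  reducible A ->
  (forall i, opnorm (A i) < 1) ->
  ~ (exists L : 'M[R]_2, XF A = [set L]) ->
  (exists P : 'M[R]_2, P \in unitmx /\
     forall i, let B := invmx P *m A i *m P in
       B i1 i0 = 0 /\ 0 < `|B i1 i1| /\ `|B i1 i1| < `|B i0 i0| /\ `|B i0 i0| < 1)
  /\ ~ (exists Q : 'M[R]_2, Q \in unitmx /\
          forall i, is_diag_mx (invmx Q *m A i *m Q)).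
Proof.
move=> N_gt0 A_unit dom [v [v0 Av]] A_norm nXF.
split; last exact: dominated_not_diagonalizable.
have P_unit := rot_basis_unit v0.
have A_tri i : uppertri (rebase (rot_basis v) (A i)).
  by have [l /(rebase_rot_basis v0) []] := Av i.
exists (rot_basis v); split => // i /=.
have [l Avl] := Av i; have [_ a_l] := rebase_rot_basis v0 Avl.
have [_ d0] := rebase_diag_neq0 P_unit A_unit A_tri i.
split; first exact: A_tri; split; first by rewrite normr_gt0.
split; first exact: rebase_diag_order_XF.
by rewrite [rebase _ _ _ _]a_l; exact: le_lt_trans (opnorm_eigen v0 Avl) (A_norm i).
Qed.
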